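(* Let $c\ge2$, let $G$ be a graph, $k\ge0$, $v\in V(G)$, and let $H_v\subseteq V(G)\setminus\{v\}$ be such that $G\setminus H_v$ contains no $\theta_c$ minor. Let $D_1,\dots,D_s$ be the connected components of $G\setminus(H_v\cup\{v\})$ that contain a neighbor of $v$, and assume each $D_i$ contains a vertex adjacent to some vertex of $H_v$. Let $\mathcal{G}$ be the bipartite graph with parts $H_v$ and $D=\{d_1,\dots,d_s\}$, where $w\in H_v$ is adjacent to $d_i$ iff $w$ has a neighbor in $D_i$. Let $S\subseteq H_v$ and $T\subseteq D$ be such that $S$ has $|S|$ $c$-stars in $T$ in $\mathcal{G}$ and every neighbor in $\mathcal{G}$ of a vertex of $T$ lies in $S$. Let $G_R$ be obtained from $G$ by deleting all edges between $v$ and vertices of $\bigcup_{d_i\in T}D_i$, and, for each $w\in S$, adding edges between $v$ and $w$ so that $v$ and $w$ are joined by at least $c$ parallel edges (adding none if they already are). Then $G$ has a set of at most $k$ vertices whose deletion leaves a graph with no $\theta_c$ minor if and only if $G_R$ has such a set.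
   Context: Graphs may have parallel edges; contraction keeps parallel edges and deletes loops. $\theta_c$ is the graph with two vertices joined by $c$ parallel edges. In a bipartite graph with parts $A,B$, for $S\subseteq A$, $T\subseteq B$, $S$ has $|S|$ $c$-stars in $T$ if to each $x\in S$ one can associate $F_x\subseteq N(x)\cap T$ with $|F_x|=c$ and $F_x\cap F_y=\emptyset$ for distinct $x,y\in S$. *)

From mathcomp Require Import all_boot.
Set Implicit Arguments. Unset Strict Implicit. Unset Printing Implicit Defensive.

(* A (multi)graph on the finite vertex type V: m x y = number of parallel
   edges between x and y; symmetric and loopless. *)
Definition is_multigraph (V : finType) (m : V -> V -> nat) : Prop :=
  (forall x y, m x y = m y x) /\ (forall x, m x x = 0).

Definition adj_in (V : finType) (m : V -> V -> nat) (A : {set V}) : rel V :=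
  fun a b => [&& a \in A, b \in A & 0 < m a b].

Definition connected_in (V : finType) (m : V -> V -> nat) (A : {set V}) : Prop :=
  forall x y, x \in A -> y \in A -> connect (adj_in m A) x y.

(* A model of the multigraph (W, mH) as a minor of G[U] where G = (V, m):
   pairwise disjoint nonempty connected branch sets inside U, and for each
   pair of distinct vertices of H at least as many G-edges between the
   corresponding branch sets as parallel edges in H. *)
Definition minor_model (V W : finType) (m : V -> V -> nat) (U : {set V})
    (mH : W -> W -> nat) (phi : W -> {set V}) : Prop :=
  [/\ forall w, phi w \subset U,
      forall w, phi w != set0,
      forall w1 w2, w1 != w2 -> [disjoint phi w1 & phi w2],
      forall w, connected_in m (phi w) &
      forall w1 w2, w1 != w2 ->
        mH w1 w2 <= \sum_(x in phi w1) \sum_(y in phi w2) m x y].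

Definition has_minor_in (V W : finType) (m : V -> V -> nat) (U : {set V})
    (mH : W -> W -> nat) : Prop :=
  exists phi : W -> {set V}, minor_model m U mH phi.

Definition theta (c : nat) : bool -> bool -> nat :=
  fun x y => if x != y then c else 0.

Definition theta_free_after (V : finType) (m : V -> V -> nat) (c : nat)
    (X : {set V}) : Prop :=
  ~ has_minor_in m (~: X) (theta c).

Definition theta_deletion (V : finType) (m : V -> V -> nat) (c k : nat) : Prop :=
  exists X : {set V}, #|X| <= k /\ theta_free_after m c X.

Definition comp_in (V : finType) (m : V -> V -> nat) (U : {set V}) (x : V)
  : {set V} := [set y in U | connect (adj_in m U) x y].

Definition Dcomps (V : finType) (m : V -> V -> nat) (H : {set V}) (v : V)
  : {set {set V}} :=
  let U := ~: (H :|: [set v]) in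
  [set comp_in m U x | x in [set x in U | 0 < m v x]].

(* adjacency in the auxiliary bipartite graph: w has a neighbour in C *)
Definition badj (V : finType) (m : V -> V -> nat) (w : V) (C : {set V}) : bool :=
  [exists y in C, 0 < m w y].

Definition has_c_stars (V : finType) (m : V -> V -> nat) (c : nat)
    (S : {set V}) (T : {set {set V}}) : Prop :=
  exists F : V -> {set {set V}},
    (forall x, x \in S -> F x \subset T /\ (forall C, C \in F x -> badj m x C)
                       /\ #|F x| = c) /\
    (forall x y, x \in S -> y \in S -> x != y -> [disjoint F x & F y]).

Definition reduced (V : finType) (m : V -> V -> nat) (c : nat) (v : V)
    (S : {set V}) (T : {set {set V}}) : V -> V -> nat :=
  let DT := \bigcup_(C in T) C in
  fun x y =>
    if ((x == v) && (y \in DT)) || ((y == v) && (x \in DT)) then 0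
    else if ((x == v) && (y \in S)) || ((y == v) && (x \in S)) then maxn (m x y) c
    else m x y.

From mathcomp Require Import all_boot.
Set Implicit Arguments. Unset Strict Implicit. Unset Printing Implicit Defensive.

(* Since theta_c is 2-connected, a theta_c minor of a graph that
   is separated by a single vertex v lives on one side of the separation.
   Both in G - X and in G_R - X', the vertex v (if present) separates the
   components of T from the rest; those components lie in G - H, which has no
   theta_c minor, and away from them and from S the graphs G and G_R agree.
   If X solves G and v is not in X, then X meets the c-star of every w in
   S \ X (otherwise w, v and that star form a theta_c); as the stars are
   disjoint, |S \ X| <= |X ∩ (∪T)|, so (X \ ∪T) ∪ S solves G_R.
   Conversely, a solution X of G_R avoiding v contains S, because v and each
   w in S are joined by c parallel edges in G_R, and then X also solves G. *)

Section Connectivity.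
Variables (V : finType) (m : V -> V -> nat).

Lemma connect_invariant (e : rel V) (a : pred V) x y :
  (forall u w, a u -> e u w -> a w) -> a x -> connect e x y -> a y.
Proof.
move=> inv ax /connectP [p pth ->]; elim: p x ax pth => //= z p IH x ax /andP [exz pth].
exact: IH (inv _ _ ax exz) pth.
Qed.

Lemma connect_adj_in_mem (C : {set V}) x y :
  x \in C -> connect (adj_in m C) x y -> y \in C.
Proof. by apply: connect_invariant => u w _ /and3P []. Qed.

Lemma connect_adj_inS (A B : {set V}) :
  A \subset B -> subrel (connect (adj_in m A)) (connect (adj_in m B)).
Proof.
move=> /subsetP sAB; apply: connect_sub => x y /and3P [xA yA mxy].
by apply: connect1; rewrite /adj_in sAB // sAB.
Qed.

Lemma connect_adj_in_closed (U C : {set V}) x y :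
  (forall a b, a \in C -> adj_in m U a b -> b \in C) -> x \in C ->
  connect (adj_in m U) x y -> connect (adj_in m C) x y.
Proof.
move=> clC xC cxy.
suff /andP [] : (y \in C) && connect (adj_in m C) x y by [].
apply: (connect_invariant (a := fun z => (z \in C) && connect (adj_in m C) x z) _ _ cxy);
  last by rewrite xC connect0.
move=> u w /andP [uC cxu] uw; have wC := clC _ _ uC uw.
rewrite wC (connect_trans cxu) // connect1 // /adj_in uC wC.
by case/and3P: uw.
Qed.

Lemma connected_in1 x : connected_in m [set x].
Proof. by move=> y z /set1P -> /set1P ->; exact: connect0. Qed.

Lemma connected_in_eq_in (m' : V -> V -> nat) (P : {set V}) :
  {in P &, m =2 m'} -> connected_in m P -> connected_in m' P.
Proof.
move=> e cP x y xP yP; rewrite -(@eq_connect _ (adj_in m P)); first exact: cP.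
by move=> a b; rewrite /adj_in; case aP: (a \in P); case bP: (b \in P); rewrite //= e.
Qed.

Hypothesis msym : forall x y, m x y = m y x.

Lemma connect_adj_in_sym (A : {set V}) : connect_sym (adj_in m A).
Proof.
apply: sym_connect_sym => a b.
by rewrite /adj_in msym; case: (a \in A); case: (b \in A).
Qed.

Lemma connected_in_from (P : {set V}) r :
  (forall a, a \in P -> connect (adj_in m P) r a) -> connected_in m P.
Proof.
move=> root x y xP yP; apply: connect_trans (root y yP).
by rewrite connect_adj_in_sym; apply: root.
Qed.

Lemma connected_setU1_cover v (F : {set {set V}}) :
  (forall C, C \in F -> connected_in m C /\ exists2 x, x \in C & 0 < m v x) ->
  connected_in m (v |: cover F).
Proof.
move=> hF; apply: connected_in_from (v) _ => a /setU1P [-> | /bigcupP [C CF aC]].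
  exact: connect0.
have [cC [x xC vx]] := hF C CF.
have sC : C \subset v |: cover F.
  by apply/subsetP => z zC; apply/setU1P; right; apply/bigcupP; exists C.
apply: (connect_trans (y := x)); last exact: connect_adj_inS sC _ _ (cC x a xC aC).
by apply: connect1; rewrite /adj_in setU11 (subsetP sC).
Qed.

End Connectivity.

Section ThetaMinors.
Variables (V : finType) (m : V -> V -> nat).

Lemma has_minor_inS (W : finType) (mH : W -> W -> nat) (U U' : {set V}) :
  U \subset U' -> has_minor_in m U mH -> has_minor_in m U' mH.
Proof.
move=> sU [phi [sub ne dj conn big]]; exists phi; split => // w.
exact: subset_trans sU.
Qed.

Lemma has_minor_in_eq_in (m' : V -> V -> nat) (W : finType) (mH : W -> W -> nat)
    (U : {set V}) :
  {in U &, m =2 m'} -> has_minor_in m U mH -> has_minor_in m' U mH.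
Proof.
move=> e [phi [sub ne dj conn big]]; exists phi; split => // [w | w1 w2 nw].
  apply: connected_in_eq_in (conn w) => x y /(subsetP (sub w)) xU /(subsetP (sub w)).
  exact: e.
apply: leq_trans (big _ _ nw) (eq_leq _).
apply: eq_bigr => x /(subsetP (sub w1)) xU; apply: eq_bigr => y /(subsetP (sub w2)).
exact: e.
Qed.

Definition theta_pair (U : {set V}) (c : nat) (P Q : {set V}) :=
  [/\ P \subset U, Q \subset U, P != set0, Q != set0 &
   [/\ [disjoint P & Q], connected_in m P, connected_in m Q &
       c <= \sum_(x in P) \sum_(y in Q) m x y]].

Hypothesis msym : forall x y, m x y = m y x.

Lemma sum_edgesC (P Q : {set V}) :
  \sum_(x in P) \sum_(y in Q) m x y = \sum_(y in Q) \sum_(x in P) m y x.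
Proof.
by rewrite exchange_big; apply: eq_bigr => y _; apply: eq_bigr => x _; apply: msym.
Qed.

Lemma theta_pairC U c P Q : theta_pair U c P Q -> theta_pair U c Q P.
Proof.
by case=> ? ? ? ? [? ? ? ?]; split => //; split; rewrite 1?disjoint_sym -1?sum_edgesC.
Qed.

Lemma has_theta_minorP (U : {set V}) c :
  has_minor_in m U (theta c) <-> exists P Q, theta_pair U c P Q.
Proof.
split=> [[phi [sub ne dj conn big]] | [P [Q [PU QU Pn Qn [dPQ cP cQ sPQ]]]]].
  by exists (phi true), (phi false); split => //; split => //; [apply: dj | apply: big].
exists (fun b => if b then P else Q); split; try by case.
- by case; case => //= _; rewrite disjoint_sym.
- by case; case => //= _; rewrite /theta //= -sum_edgesC.
Qed.

Lemma has_theta_minor_edge (U : {set V}) c x y :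
  x \in U -> y \in U -> x != y -> c <= m x y -> has_minor_in m U (theta c).
Proof.
move=> xU yU xy cxy; apply/has_theta_minorP; exists [set x], [set y].
split; rewrite ?sub1set ?set11 //; try by apply/set0Pn; exists x; rewrite set11.
  by apply/set0Pn; exists y; rewrite set11.
by split; rewrite ?disjoints1 ?inE ?big_set1 //; exact: connected_in1.
Qed.

End ThetaMinors.

Section Separation.
Variables (V : finType) (m : V -> V -> nat).
Hypothesis msym : forall x y, m x y = m y x.

Definition no_edges (A B : {set V}) :=
  forall x y, x \in A :\: B -> y \in B :\: A -> m x y = 0.

Lemma no_edgesC A B : no_edges A B -> no_edges B A.
Proof. by move=> ne x y xB yA; rewrite msym ne. Qed.

Lemma connect_sep_mem (A B P : {set V}) x y :
  no_edges A B -> P \subset A :|: B -> [disjoint P & A :&: B] ->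
  x \in A -> connect (adj_in m P) x y -> y \in A.
Proof.
move=> ne PAB dP.
apply: (connect_invariant (a := fun z => z \in A)) => u w /= uA /and3P [uP wP muw].
have uB : u \notin B by apply: contraFN (disjointFr dP uP) => uB; apply/setIP.
apply: contraTT muw => wA; rewrite -leqNgt leqn0; apply/eqP/ne; apply/setDP => //.
by have := subsetP PAB w wP; rewrite inE (negbTE wA).
Qed.

Lemma connected_sep_side (A B P : {set V}) :
  no_edges A B -> connected_in m P -> P \subset A :|: B -> [disjoint P & A :&: B] ->
  P \subset A \/ P \subset B.
Proof.
move=> ne cP PAB dP; have [-> | [x xP]] := set_0Vmem P; first by left; exact: sub0set.
have /setUP [xA | xB] := subsetP PAB x xP.
  by left; apply/subsetP => y yP; exact: connect_sep_mem ne PAB dP xA (cP x y xP yP).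
right; apply/subsetP => y yP; apply: connect_sep_mem (no_edgesC ne) _ _ xB (cP x y xP yP).
  by rewrite setUC.
by rewrite setIC.
Qed.

Lemma connected_sep_setI (A B P : {set V}) v :
  no_edges A B -> A :&: B \subset [set v] -> connected_in m P -> P \subset A :|: B ->
  connected_in m (P :&: A).
Proof.
move=> ne sAB cP PAB.
have cut z : z \in A -> z \in B -> z = v.
  by move=> zA zB; apply/set1P/(subsetP sAB)/setIP.
have [vPA | vPA] := boolP (v \in P :&: A); last first.
  have dP : [disjoint P & A :&: B].
    rewrite -setI_eq0; apply/eqP/setP => z; rewrite !inE.
    apply/negP => /and3P [zP zA zB]; move: vPA; rewrite -(cut z zA zB).
    by rewrite inE zP zA.
  case: (connected_sep_side ne cP PAB dP) => [/setIidPl -> // | sPB] x y.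
  rewrite inE => /andP [xP xA]; move: vPA.
  by rewrite -(cut x xA (subsetP sPB x xP)) inE xP xA.
(* A path in P that leaves A must return through the cut vertex v. *)
have reach y : y \in P -> (y \in B :\: A) || connect (adj_in m (P :&: A)) v y.
  move=> yP; case/setIP: (vPA) => vP _; have cvy := cP v y vP yP.
  apply: (connect_invariant
    (a := fun z => (z \in B :\: A) || connect (adj_in m (P :&: A)) v z) _ _ cvy).
    2: by rewrite connect0 orbT.
  move=> u w uR /and3P [uP wP muw]; have [wA | wA] := boolP (w \in A); last first.
    by have := subsetP PAB w wP; rewrite inE (negbTE wA) /= => wB; rewrite inE wB wA.
  case/orP: uR => [uBA | cvu].
    have wB : w \in B.
      apply: contraTT muw => wB; rewrite -leqNgt leqn0 msym.
      by apply/eqP/ne; rewrite // inE wA wB.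
    by rewrite (cut w wA wB) connect0 orbT.
  have uPA := connect_adj_in_mem vPA cvu.
  by rewrite (connect_trans cvu) ?orbT // connect1 // /adj_in uPA inE wP wA.
apply: (connected_in_from msym (r := v)) => y /setIP [yP yA].
by have := reach y yP; rewrite inE yA.
Qed.

Lemma theta_pair_sep_restrict (A B P Q : {set V}) v c :
  no_edges A B -> A :&: B \subset [set v] -> 0 < c -> Q \subset A :\: B ->
  theta_pair m (A :|: B) c P Q -> theta_pair m A c (P :&: A) Q.
Proof.
move=> ne sAB c0 /subsetP QAB [PU QU _ Qn [dPQ cP cQ sPQ]].
have sum_PA : \sum_(x in P) \sum_(y in Q) m x y = \sum_(x in P :&: A) \sum_(y in Q) m x y.
  rewrite (big_setID A) /= [X in _ + X]big1 ?addn0 // => x /setDP [xP xA].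
  apply: big1 => y yQ; apply: (no_edgesC ne); last exact: QAB.
  by have := subsetP PU x xP; rewrite inE (negbTE xA) /= => xB; rewrite inE xB xA.
split => //.
- exact: subsetIr.
- by apply/subsetP => y /QAB /setDP [].
- by apply: contraTneq sPQ => PA0; rewrite -ltnNge sum_PA PA0 big_set0.
split => //; last by rewrite -sum_PA.
- exact: disjointWl (subsetIl _ _) dPQ.
- exact: connected_sep_setI ne sAB cP PU.
Qed.

Lemma has_theta_minor_sep (A B : {set V}) v c :
  no_edges A B -> A :&: B \subset [set v] -> 0 < c ->
  has_minor_in m (A :|: B) (theta c) ->
  has_minor_in m A (theta c) \/ has_minor_in m B (theta c).
Proof.
move=> ne sAB c0 /(has_theta_minorP msym) [P [Q t]].
wlog dQ : P Q t / [disjoint Q & A :&: B].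
  move=> gen; have [dQ | dQ] := boolP [disjoint Q & A :&: B]; first exact: gen t dQ.
  apply: gen (theta_pairC msym t) _.
  case: t => _ _ _ _ [dPQ _ _ _]; rewrite -setI_eq0 in dQ.
  have [z /setIP [zQ /(subsetP sAB) /set1P zv]] := set0Pn _ dQ.
  rewrite -setI_eq0; apply/eqP/setP => x; rewrite in_set0 in_setI.
  apply/negbTE/andP => [[xP /(subsetP sAB) /set1P xv]].
  by move: (disjointFr dPQ xP); rewrite xv -zv zQ.
have [_ QU _ _ [_ _ cQ _]] := t.
have avoid (A' B' : {set V}) : Q \subset A' -> A' :&: B' = A :&: B -> Q \subset A' :\: B'.
  move=> /subsetP QA' e; apply/subsetP => x xQ; rewrite inE QA' // andbT.
  by apply: contraFN (disjointFr dQ xQ) => xB'; rewrite -e inE xB' QA'.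
case: (connected_sep_side ne cQ QU dQ) => sQ; [left | right];
  apply/(has_theta_minorP msym).
  by exists (P :&: A), Q; apply: theta_pair_sep_restrict ne sAB c0 (avoid _ _ sQ erefl) t.
exists (P :&: B), Q.
apply: (theta_pair_sep_restrict (v := v) (no_edgesC ne)); rewrite 1?setIC //.
- by apply: avoid sQ _; rewrite setIC.
- by rewrite setUC.
Qed.

End Separation.

Lemma leq_card_disjoint_family (I T : finType) (A : {set I}) (Y : I -> {set T})
    (Z : {set T}) :
  (forall i, i \in A -> Y i :&: Z != set0) ->
  {in A &, forall i j, i != j -> [disjoint Y i & Y j]} -> #|A| <= #|Z|.
Proof.
move=> meet dj; pose f i := [pick y in Y i :&: Z].
have fP i : i \in A -> exists2 y, f i = Some y & y \in Y i :&: Z.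
  rewrite /f => iA; case: pickP => [y yYZ | none]; first by exists y.
  by have /set0Pn [y] := meet i iA; rewrite none.
have f_inj : {in A &, injective f}.
  move=> i j iA jA fij; apply/eqP/negPn/negP => ij.
  have [y fiy /setIP [yi _]] := fP i iA; have [y' fjy /setIP [yj _]] := fP j jA.
  by move: fij yj; rewrite fiy fjy => -[<-]; rewrite (disjointFr (dj i j iA jA ij) yi).
rewrite -(card_in_imset f_inj) -(card_imset Z Some_inj).
apply: subset_leq_card; apply/subsetP => _ /imsetP [i iA ->].
by have [y -> /setIP [_ yZ]] := fP i iA; apply: imset_f.
Qed.

Section Components.
Variables (V : finType) (m : V -> V -> nat).
Hypothesis msym : forall x y, m x y = m y x.

Lemma comp_in_closed (U : {set V}) x a b :
  a \in comp_in m U x -> adj_in m U a b -> b \in comp_in m U x.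
Proof.
rewrite !inE => /andP [aU cxa] ab; case/and3P: (ab) => _ -> _ /=.
exact: connect_trans cxa (connect1 ab).
Qed.

Lemma comp_in_eq (U : {set V}) x1 x2 a :
  a \in comp_in m U x1 -> a \in comp_in m U x2 -> comp_in m U x1 = comp_in m U x2.
Proof.
rewrite !inE => /andP [_ c1] /andP [_ c2]; apply/setP => y; rewrite !inE.
by rewrite (same_connect (connect_adj_in_sym msym U) c1)
           (same_connect (connect_adj_in_sym msym U) c2).
Qed.

Lemma connected_comp_in (U : {set V}) x : connected_in m (comp_in m U x).
Proof.
move=> a b aC bC; apply: (connect_adj_in_closed (U := U)) (aC) _.
  by move=> y z; apply: comp_in_closed.
move: aC bC; rewrite !inE => /andP [_ cxa] /andP [_ cxb].
by apply: connect_trans cxb; rewrite connect_adj_in_sym.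
Qed.

Variables (H : {set V}) (v : V).

Lemma Dcomps_sub C : C \in Dcomps m H v -> C \subset ~: (H :|: [set v]).
Proof. by case/imsetP => x _ ->; apply/subsetP => y /setIdP []. Qed.

Lemma Dcomps_closed C x y : C \in Dcomps m H v ->
  x \in C -> y \notin H -> y != v -> 0 < m x y -> y \in C.
Proof.
case/imsetP => x0 _ -> xC yH yv mxy; apply: comp_in_closed (xC) _.
by move: xC; rewrite /adj_in mxy !inE (negbTE yH) (negbTE yv) andbT => /andP [->].
Qed.

Lemma Dcomps_eq C1 C2 y : C1 \in Dcomps m H v -> C2 \in Dcomps m H v ->
  y \in C1 -> y \in C2 -> C1 = C2.
Proof. by case/imsetP => x1 _ -> /imsetP [x2 _ ->]; apply: comp_in_eq. Qed.

Lemma trivIset_Dcomps : trivIset (Dcomps m H v).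
Proof.
apply/trivIsetP => C1 C2 h1 h2 ne; rewrite -setI_eq0.
apply: contraR ne => /set0Pn [y /setIP [y1 y2]].
by rewrite (Dcomps_eq h1 h2 y1 y2).
Qed.

Lemma connected_Dcomps C : C \in Dcomps m H v -> connected_in m C.
Proof. by case/imsetP => x _ ->; apply: connected_comp_in. Qed.

Lemma Dcomps_nbr C : C \in Dcomps m H v -> exists2 x, x \in C & 0 < m v x.
Proof.
case/imsetP => x /setIdP [xU vx] ->; exists x => //.
by rewrite inE xU connect0.
Qed.

(* Branch sets [{w}] and [v |: cover F]. *)
Lemma has_theta_minor_star (U : {set V}) w (F : {set {set V}}) c :
  v \notin H -> w \in H -> w \in U -> v \in U ->
  F \subset Dcomps m H v -> cover F \subset U -> c <= #|F| ->
  (forall C, C \in F -> badj m w C) -> has_minor_in m U (theta c).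
Proof.
move=> vH wH wU vU sFD FU cF adjF; have FD := subsetP sFD.
have avoid z : z \in cover F -> z \notin H /\ z != v.
  case/bigcupP => C CF zC; move: (subsetP (Dcomps_sub (FD C CF)) z zC).
  by rewrite !inE negb_or => /andP [-> ->].
have vF : v \notin cover F by apply/negP => /avoid [_]; rewrite eqxx.
have wF : w \notin v |: cover F.
  rewrite !inE negb_or; apply/andP; split; first by apply: contraNneq vH => <-.
  by apply/negP => /avoid [/negP].
apply/(has_theta_minorP msym); exists [set w], (v |: cover F).
split; rewrite ?subUset ?sub1set ?vU ?FU //.
- by apply/set0Pn; exists w; rewrite set11.
- by apply/set0Pn; exists v; rewrite setU11.
split; rewrite ?disjoints1 //; first exact: connected_in1.
  apply: (connected_setU1_cover msym (v := v) (F := F)) => C CF.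
  by split; [apply: connected_Dcomps | apply: Dcomps_nbr]; apply: FD.
rewrite big_set1 big_setU1 //= (big_trivIset _ (trivIsetS sFD trivIset_Dcomps)).
apply: leq_trans (leq_addl _ _); apply: leq_trans cF _; rewrite -sum1_card.
apply: leq_sum => C CF; have /existsP [y /andP [yC wy]] := adjF C CF.
by rewrite (bigD1 y) //=; apply: leq_trans wy (leq_addr _ _).
Qed.

End Components.

Section Reduction.
Variables (V : finType) (m : V -> V -> nat) (c : nat) (v : V)
  (H S : {set V}) (T : {set {set V}}).
Hypotheses (msym : forall x y, m x y = m y x) (c_gt0 : 0 < c) (vH : v \notin H)
  (SH : S \subset H) (TD : T \subset Dcomps m H v)
  (TS : forall C w, C \in T -> w \in H -> badj m w C -> w \in S)
  (hfree : ~ has_minor_in m (~: H) (theta c)).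

Local Notation R := (reduced m c v S T).

Lemma cover_T_avoid x : x \in cover T -> x \notin H /\ x != v.
Proof.
case/bigcupP => C /(subsetP TD) /Dcomps_sub /subsetP CHv /CHv.
by rewrite !inE negb_or => /andP [].
Qed.

Lemma v_notin_cover_T : v \notin cover T.
Proof. by apply/negP => /cover_T_avoid []; rewrite eqxx. Qed.

Lemma S_notin_cover_T w : w \in S -> w \notin cover T.
Proof. by move=> wS; apply/negP => /cover_T_avoid [/negP]; rewrite (subsetP SH). Qed.

Lemma v_notin_S : v \notin S.
Proof. by apply: contraNN vH => /(subsetP SH). Qed.

Lemma reduced_sym x y : R x y = R y x.
Proof.
by rewrite /reduced (orbC ((y == v) && _)) (orbC ((y == v) && (x \in S))) msym.
Qed.

Lemma reduced_eq_in (U : {set V}) :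
  (v \in U -> [disjoint U & cover T :|: S]) -> {in U &, R =2 m}.
Proof.
move=> dU x y xU yU; rewrite /reduced -/(cover T).
have [vU | vU] := boolP (v \in U); last first.
  have /negbTE -> : x != v by apply: contraNneq vU => <-.
  by have /negbTE -> : y != v by apply: contraNneq vU => <-.
have out z : z \in U -> (z \in cover T) = false /\ (z \in S) = false.
  by move=> /(disjointFr (dU vU)); rewrite inE => /norP [/negbTE -> /negbTE ->].
by have [-> ->] := out x xU; have [-> ->] := out y yU; rewrite !andbF.
Qed.

Lemma reduced_has_minor_in (W : finType) (mH : W -> W -> nat) (U : {set V}) :
  (v \in U -> [disjoint U & cover T :|: S]) ->
  has_minor_in R U mH <-> has_minor_in m U mH.
Proof.
move=> dU; have e := reduced_eq_in dU; split; apply: has_minor_in_eq_in => // x y xU yU.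
by rewrite e.
Qed.

Lemma reduced_v_S w : w \in S -> c <= R v w.
Proof.
move=> wS; rewrite /reduced -/(cover T) eqxx (negbTE (S_notin_cover_T wS)) wS /=.
by rewrite (negbTE v_notin_cover_T) andbF /= leq_maxr.
Qed.

Lemma reduced_cover_T_v x : x \in cover T -> R x v = 0.
Proof. by move=> xT; rewrite /reduced -/(cover T) eqxx xT orbT. Qed.

Lemma cover_T_nbr x y :
  x \in cover T -> y \notin cover T -> y != v -> 0 < m x y -> y \in S.
Proof.
case/bigcupP => C CT xC yT yv mxy; have [yH | yH] := boolP (y \in H).
  by apply: TS CT yH _; apply/existsP; exists x; rewrite xC msym.
have yC := Dcomps_closed (subsetP TD C CT) xC yH yv mxy.
by move: yT; rewrite (subsetP (bigcup_sup _ CT) y yC).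
Qed.

Lemma theta_free_after_reduced_v (X : {set V}) :
  v \in X -> theta_free_after R c X <-> theta_free_after m c X.
Proof.
move=> vX; have e : has_minor_in R (~: X) (theta c) <-> has_minor_in m (~: X) (theta c).
  by apply: reduced_has_minor_in; rewrite inE vX.
by split=> free /e.
Qed.

Lemma reduced_free_S_sub (X : {set V}) :
  v \notin X -> theta_free_after R c X -> S \subset X.
Proof.
move=> vX Xfree; apply/subsetP => w wS; apply/negPn/negP => wX; apply: Xfree.
apply: (has_theta_minor_edge reduced_sym (x := v) (y := w)); rewrite ?inE ?vX //.
  by apply: contraNneq v_notin_S => ->.
exact: reduced_v_S.
Qed.

(* G - X splits at v into the components of T (inside G - H) and the rest,
   where G and G_R coincide. *)
Lemma theta_free_after_of_reduced (X : {set V}) :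
  v \notin X -> theta_free_after R c X -> theta_free_after m c X.
Proof.
move=> vX Xfree; have SX := reduced_free_S_sub vX Xfree.
pose A := ~: X :&: (v |: cover T); pose B := ~: X :\: cover T.
have AB : A :|: B = ~: X.
  by apply/setP => z; rewrite !inE; case: (z \in X); case: (z \in cover T); rewrite ?orbT.
rewrite /theta_free_after -AB => /(has_theta_minor_sep msym (v := v)) [] //.
- move=> x y /setDP [/setIP [xX _] xB] /setDP [/setDP [yX yT] yA].
  have xT : x \in cover T by apply: contraNT xB => xT; apply/setDP.
  have yv : y != v by apply: contraNneq yA => ->; rewrite /A !inE eqxx vX.
  apply/eqP; rewrite -leqn0 leqNgt; apply/negP => mxy.
  by move: yX; rewrite inE (subsetP SX _ (cover_T_nbr xT yT yv mxy)).
- apply/subsetP => z /setIP [/setIP [_ /setU1P [-> | zT]] /setDP [_ /negP]] //.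
  by rewrite set11.
- move=> hA; apply: hfree; apply: has_minor_inS hA; apply/subsetP => z.
  by case/setIP => _ /setU1P [-> | /cover_T_avoid []]; rewrite inE.
- move=> hB; apply: Xfree; apply: has_minor_inS (subsetDl (~: X) (cover T)) _.
  have dB : [disjoint B & cover T :|: S].
    rewrite -setI_eq0; apply/eqP/setP => z; rewrite !inE.
    apply/negbTE/andP => [[/andP [zT zX]]].
    by case/orP => [/(negP zT) | /(subsetP SX) /(negP zX)].
  exact: (iffRL (reduced_has_minor_in _ (fun _ => dB))).
Qed.

Lemma theta_deletion_of_reduced k : theta_deletion R c k -> theta_deletion m c k.
Proof.
case=> X [Xk Xfree]; exists X; split => //.
have [vX | vX] := boolP (v \in X); first exact/(theta_free_after_reduced_v vX).
exact: theta_free_after_of_reduced.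
Qed.

(* Otherwise w, v and the c-star of w would give a theta_c in G - X. *)
Lemma c_star_meets (F : {set {set V}}) (X : {set V}) w :
  v \notin X -> theta_free_after m c X -> w \in S :\: X ->
  F \subset T -> (forall C, C \in F -> badj m w C) -> #|F| = c ->
  cover F :&: (X :&: cover T) != set0.
Proof.
move=> vX Xfree /setDP [wS wX] FT Fadj Fc; apply/negP => /eqP FX0; apply: Xfree.
have FcoverT : cover F \subset cover T.
  by apply/bigcupsP => C CF; apply: bigcup_sup (subsetP FT C CF).
apply: (has_theta_minor_star msym vH (subsetP SH w wS) _ _ (subset_trans FT TD));
  rewrite ?inE ?Fc //.
apply/subsetP => z zF; rewrite inE; apply/negP => zX.
by have := in_set0 z; rewrite -FX0 !inE zF zX (subsetP FcoverT z zF).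
Qed.

Lemma card_S_setD_le (X : {set V}) :
  has_c_stars m c S T -> v \notin X -> theta_free_after m c X ->
  #|S :\: X| <= #|X :&: cover T|.
Proof.
case=> F [Fstar Fdj] vX Xfree.
have FD w C : w \in S -> C \in F w -> C \in Dcomps m H v.
  by case/Fstar => FT _ CF; apply/(subsetP TD)/(subsetP FT).
apply: (leq_card_disjoint_family (Y := fun w => cover (F w))).
  move=> w wSX; have [FT [Fadj Fc]] := Fstar w (subsetP (subsetDl S X) w wSX).
  exact: c_star_meets vX Xfree wSX FT Fadj Fc.
move=> w1 w2 /setDP [w1S _] /setDP [w2S _] w12.
rewrite -setI_eq0; apply/eqP/setP => y; rewrite !inE.
apply/negbTE/andP => [[/bigcupP [C1 C1F yC1] /bigcupP [C2 C2F yC2]]].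
have C12 : C1 = C2 := Dcomps_eq msym (FD w1 C1 w1S C1F) (FD w2 C2 w2S C2F) yC1 yC2.
by move: (disjointFr (Fdj w1 w2 w1S w2S w12) C1F); rewrite C12 C2F.
Qed.

(* In G_R - ((X \ cover T) ∪ S) the components of T are cut off completely. *)
Lemma reduced_theta_free_after (X : {set V}) :
  theta_free_after m c X -> theta_free_after R c (X :\: cover T :|: S).
Proof.
move=> Xfree; set X' := X :\: cover T :|: S; pose B := ~: X' :\: cover T.
have TB : cover T :|: B = ~: X'.
  apply/setP => z; rewrite !inE; case zT: (z \in cover T); rewrite /= ?andbF //=.
  by apply/esym/negP => /S_notin_cover_T; rewrite zT.
rewrite /theta_free_after -TB => /(has_theta_minor_sep reduced_sym (v := v)) [] //.
- move=> x y /setDP [xT _] /setDP [/setDP [yX' yT] _].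
  have [_ xv] := cover_T_avoid xT.
  have [-> | yv] := eqVneq y v; first exact: reduced_cover_T_v.
  rewrite /reduced -/(cover T) (negbTE xv) (negbTE yv) /=.
  apply/eqP; rewrite -leqn0 leqNgt; apply/negP => mxy.
  by move: yX'; rewrite !inE (cover_T_nbr xT yT yv mxy) orbT.
- by apply/subsetP => z /setIP [zT /setDP [_ /negP]].
- move=> hT; apply: hfree; apply: has_minor_inS (_ : cover T \subset ~: H) _.
    by apply/subsetP => z /cover_T_avoid []; rewrite inE.
  have dT : v \in cover T -> [disjoint cover T & cover T :|: S].
    by rewrite (negbTE v_notin_cover_T).
  exact: (iffLR (reduced_has_minor_in _ dT)).
- move=> hB; apply: Xfree; apply: has_minor_inS (_ : B \subset ~: X) _.
    apply/subsetP => z /setDP [zX' zT].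
    by move: zX'; rewrite /X' !inE (negbTE zT) /= => /norP [].
  have dB : [disjoint B & cover T :|: S].
    rewrite -setI_eq0; apply/eqP/setP => z; rewrite !inE.
    apply/negbTE/andP => [[/andP [zT zX']]].
    by case/orP => [zT' | zS]; [rewrite zT' in zT | move: zX'; rewrite zS orbT].
  exact: (iffLR (reduced_has_minor_in _ (fun _ => dB))).
Qed.

Lemma theta_deletion_reduced k :
  has_c_stars m c S T -> theta_deletion m c k -> theta_deletion R c k.
Proof.
move=> stars [X [Xk Xfree]]; have [vX | vX] := boolP (v \in X).
  by exists X; split => //; apply/(theta_free_after_reduced_v vX).
exists (X :\: cover T :|: S); split; last exact: reduced_theta_free_after.
have -> : X :\: cover T :|: S = X :\: cover T :|: S :\: X.
  apply/setP => z; rewrite !inE.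
  by case zS: (z \in S); rewrite ?(negbTE (S_notin_cover_T zS)); case: (z \in X).
apply: leq_trans (leq_card_setU _ _) (leq_trans _ Xk).
by rewrite -(cardsID (cover T) X) addnC leq_add2r card_S_setD_le.
Qed.

End Reduction.

Theorem mainTheorem16 (V : finType) (m : V -> V -> nat) (c k : nat) (v : V)
    (H : {set V}) (S : {set V}) (T : {set {set V}}) :
  is_multigraph m ->
  2 <= c ->
  v \notin H ->
  ~ has_minor_in m (~: H) (theta c) ->
  (forall C, C \in Dcomps m H v -> exists2 w, w \in H & badj m w C) ->
  S \subset H ->
  T \subset Dcomps m H v ->
  has_c_stars m c S T ->
  (forall C w, C \in T -> w \in H -> badj m w C -> w \in S) ->
  (theta_deletion m c k <-> theta_deletion (reduced m c v S T) c k).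
Proof.
move=> [msym _] /ltnW c_gt0 vH hfree _ SH TD stars TS.
split; first exact: (theta_deletion_reduced msym c_gt0 vH SH TD TS hfree stars).
exact: (theta_deletion_of_reduced msym c_gt0 vH SH TD TS hfree).
Qed.
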